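(* Let $p>2$ be prime and let $C$ be a $\mathbb{Z}_p\mathbb{Z}_{p^2}$-linear code of type $(\alpha,\beta;\gamma,\delta;\kappa)$ and length $n=\alpha+p\beta$. Then $\ker(C)\in\{\gamma+\delta,\gamma+\delta+1,\ldots,\gamma+2\delta\}$.
   Context: A $\mathbb{Z}_p\mathbb{Z}_{p^2}$-additive code $\mathcal{C}$ is a subgroup of $\mathbb{Z}_p^\alpha\times\mathbb{Z}_{p^2}^\beta$; as a group $\mathcal{C}\cong\mathbb{Z}_p^\gamma\times\mathbb{Z}_{p^2}^\delta$, and if $\kappa$ is the $\mathbb{Z}_p$-dimension of the projection onto the first $\alpha$ coordinates of the subcode of codewords of order dividing $p$, $\mathcal{C}$ has type $(\alpha,\beta;\gamma,\delta;\kappa)$. The Gray map is $\phi(\theta)=\theta''(1,\ldots,1)+\theta'(0,1,\ldots,p-1)$ for $\theta=\theta''p+\theta'\in\mathbb{Z}_{p^2}$, $\theta',\theta''\in\{0,\ldots,p-1\}$, and $\Phi(\mathbf{x},\mathbf{y})=(\mathbf{x},\phi(y_1),\ldots,\phi(y_\beta))$. A $\mathbb{Z}_p\mathbb{Z}_{p^2}$-linear code of that type is $C=\Phi(\mathcal{C})$. $K(C)=\{\mathbf{x}\in\mathbb{Z}_p^n\mid C+\mathbf{x}=C\}$ and $\ker(C)=\dim_{\mathbb{Z}_p}K(C)$. *)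

From HB Require Import structures.
From mathcomp Require Import all_boot all_order all_algebra.
Set Implicit Arguments. Unset Strict Implicit. Unset Printing Implicit Defensive.
Import GRing.Theory.
Local Open Scope ring_scope.

Definition amb (p a b : nat) := ('rV['F_p]_a * 'rV['Z_(p ^ 2)]_b)%type.

Definition is_additive_code (p a b : nat) (C : {set amb p a b}) : Prop :=
  0 \in C /\ (forall x y, x \in C -> y \in C -> x - y \in C).

(* C has type (alpha, beta; gamma, delta; kappa):
   C is isomorphic as a group to Z_p^gamma x Z_{p^2}^delta, and kappa is the
   Z_p-dimension of the projection onto the first alpha coordinates of the
   subcode of codewords of order dividing p (a Z_p-subspace of size p^kappa). *)
Definition has_type (p a b : nat) (C : {set amb p a b}) (g d k : nat) : Prop :=
  (exists f : ({ffun 'I_g -> 'F_p} * {ffun 'I_d -> 'Z_(p ^ 2)})%type -> amb p a b,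
      [/\ {morph f : u v / u + v >-> u + v}, injective f & f @: setT = C])
  /\ #|[set c.1 | c in [set c in C | c *+ p == 0]]| = (p ^ k)%N.

Definition gray (p : nat) (t : 'Z_(p ^ 2)) : 'rV['F_p]_p :=
  \row_(j < p) (((t %/ p)%N)%:R + ((t %% p)%N)%:R * (j : nat)%:R).

Definition Phi (p a b : nat) (c : amb p a b) : 'rV['F_p]_(a + b * p) :=
  row_mx c.1 (mxvec (\matrix_(i < b, j < p) gray (c.2 0 i) 0 j)).

Definition kernel (p n : nat) (C : {set 'rV['F_p]_n}) : {set 'rV['F_p]_n} :=
  [set x | [set c + x | c in C] == C].

Definition ker_dim (p n : nat) (C : {set 'rV['F_p]_n}) : nat :=
  \dim (<< enum (kernel C) >>%VS).

(* The Gray map is injective, and phi(p a + t) = phi(p a) + phi(t) because adding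
   p a only shifts the high p-adic digit of t.  Hence Phi is additive on
   translations by codewords of order p, so Phi maps the subcode of such
   codewords, of size p^(gamma + delta), into the kernel K(C).  Conversely
   x |-> c0 + x embeds K(C) into Phi(C), of size p^(gamma + 2 delta), and K(C),
   being an additive subgroup of Z_p^n, has size p^ker(C). *)

From mathcomp Require Import all_boot all_order all_algebra finfield.
Set Implicit Arguments.
Unset Strict Implicit.
Unset Printing Implicit Defensive.

Import GRing.Theory.
Local Open Scope ring_scope.

Section GrayMap.

Variable p : nat.
Hypothesis p_pr : prime p.

Let p_gt0 : (0 < p)%N := prime_gt0 p_pr.

Lemma Zp_sqr_gt1 : (1 < p ^ 2)%N.
Proof. by rewrite -(exp1n 2) ltn_exp2r // prime_gt1. Qed.

Lemma gray_natr m :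
  gray (m%:R : 'Z_(p ^ 2)) = \row_(j < p) ((m %/ p)%:R + (m %% p)%:R * j%:R).
Proof.
apply/rowP => j; rewrite !mxE val_Zp_nat ?Zp_sqr_gt1 //.
rewrite modn_dvdm ?dvdn_exp //; congr (_ + _).
by rewrite -modn_divl (Fp_nat_mod p_pr).
Qed.

Lemma gray_inj : injective (@gray p).
Proof.
move=> s t; rewrite -[s]natr_Zp -[t]natr_Zp !gray_natr => /rowP eq_st.
have lt_div (u : 'Z_(p ^ 2)) : (u %/ p < p)%N.
  by rewrite ltn_divLR // mulnn; case: u => u /=; rewrite Zp_cast ?Zp_sqr_gt1.
have := eq_st (Ordinal p_gt0); have := eq_st (Ordinal (prime_gt1 p_pr)).
rewrite !mxE /= !mulr0 !addr0 !mulr1 => + eq_div; rewrite eq_div => /addrI.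
move: eq_div => /(congr1 val) /= + /(congr1 val) /=.
rewrite !(val_Fp_nat p_pr) !modn_mod !(modn_small (lt_div _)) => eq_div eq_mod.
by apply: val_inj; rewrite /= (divn_eq s p) (divn_eq t p) eq_div eq_mod.
Qed.

Lemma Zp_sqr_mulp_torsion k : ((k * p)%:R : 'Z_(p ^ 2)) *+ p = 0.
Proof. by rewrite -mulrnA -mulnA mulnn natrM pchar_Zp ?Zp_sqr_gt1 ?mulr0. Qed.

Lemma Zp_sqr_torsionP (s : 'Z_(p ^ 2)) : s *+ p = 0 -> s = ((s %/ p) * p)%:R.
Proof.
rewrite -[s in s *+ p]natr_Zp -mulrnA => /(congr1 val) /=.
rewrite val_Zp_nat ?Zp_sqr_gt1 // => /eqP; rewrite -/(dvdn _ _) => psqr_dvd.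
have /divnK -> : (p %| s)%N by rewrite -(dvdn_pmul2r p_gt0) mulnn.
by rewrite natr_Zp.
Qed.

Lemma Zp_sqr_mulp_inj : injective (fun k : 'F_p => ((k : nat) * p)%:R : 'Z_(p ^ 2)).
Proof.
have lt_mulp (k : 'F_p) : ((k : nat) * p < p ^ 2)%N.
  by rewrite -mulnn ltn_pmul2r //; case: k => k /=; rewrite Fp_cast.
move=> k l /(congr1 val) /=; rewrite !val_Zp_nat ?Zp_sqr_gt1 // !modn_small //.
by move/eqP; rewrite eqn_pmul2r // => /eqP /val_inj.
Qed.

Lemma gray_addl_torsion (s t : 'Z_(p ^ 2)) :
  s *+ p = 0 -> gray (s + t) = gray s + gray t.
Proof.
move/Zp_sqr_torsionP ->; rewrite -[t]natr_Zp -natrD !gray_natr.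
apply/rowP => j; rewrite !mxE divnMDl // modnMDl mulnK // modnMl.
by rewrite natrD mul0r addr0 addrA.
Qed.

Lemma Phi_inj a b : injective (@Phi p a b).
Proof.
move=> [x y] [x' y'] /eq_row_mx [/= -> /(can_inj mxvecK)/matrixP eq_gray].
congr pair; apply/rowP => i; apply: gray_inj; apply/rowP => j.
by have := eq_gray i j; rewrite !mxE.
Qed.

Lemma Phi_addl_torsion a b (c0 c : amb p a b) :
  c0 *+ p = 0 -> Phi (c0 + c) = Phi c0 + Phi c.
Proof.
rewrite pairMnE => -[_ /matrixP torsion2].
have gray_sum i : gray ((c0 + c).2 0 i) = gray (c0.2 0 i) + gray (c.2 0 i).
  by rewrite -gray_addl_torsion ?mxE //; have := torsion2 0 i; rewrite mulmxnE mxE.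
rewrite /Phi add_row_mx -linearD; congr (row_mx _ (mxvec _)).
apply/matrixP => i j.
rewrite mxE (_ : gray _ = gray (c0.2 0 i) + gray (c.2 0 i)); last exact: gray_sum.
by rewrite !mxE.
Qed.

End GrayMap.

Section Kernel.

Variables (p n : nat) (D : {set 'rV['F_p]_n}).

Lemma kernelP x : reflect ([set c + x | c in D] = D) (x \in kernel D).
Proof. by rewrite inE; apply: eqP. Qed.

Lemma translate_sub_kernel x : [set c + x | c in D] \subset D -> x \in kernel D.
Proof. by move=> sub_xD; rewrite inE eqEcard sub_xD (card_imset _ (addIr x)) leqnn. Qed.

Lemma card_kernel_le c0 : c0 \in D -> (#|kernel D| <= #|D|)%N.
Proof.
move=> Dc0; rewrite -(card_imset _ (addrI c0)); apply/subset_leq_card/subsetP.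
by move=> _ /imsetP[x /kernelP Dx ->]; rewrite -Dx; apply/imsetP; exists c0.
Qed.

Lemma mem0_kernel : 0 \in kernel D.
Proof. by apply/kernelP; rewrite (eq_imset _ (@addr0 _)) imset_id. Qed.

Lemma kernelD x y : x \in kernel D -> y \in kernel D -> x + y \in kernel D.
Proof.
move=> /kernelP Dx /kernelP Dy; apply/kernelP.
rewrite -[RHS]Dy -[in RHS]Dx -imset_comp; apply: eq_imset => c /=.
by rewrite addrA.
Qed.

Lemma kernelMn x m : x \in kernel D -> x *+ m \in kernel D.
Proof. by move=> Dx; elim: m => [|m IHm]; rewrite ?mem0_kernel // mulrS kernelD. Qed.

Lemma span_kernel : (<< enum (kernel D) >>)%VS =i kernel D.
Proof.
move=> x; apply/idP/idP => [|Dx]; last by apply: memv_span; rewrite mem_enum.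
move/coord_span ->; apply: (big_ind (fun v => v \in kernel D)); rewrite ?mem0_kernel //.
  exact: kernelD.
move=> i _; rewrite -[coord _ _ _]natr_Zp scaler_nat kernelMn //.
by rewrite -mem_enum -tnth_nth mem_tnth.
Qed.

Hypothesis p_pr : prime p.

Lemma card_kernel : #|kernel D| = (p ^ ker_dim D)%N.
Proof. by rewrite -(eq_card span_kernel) card_vspace card_Fp. Qed.

End Kernel.

Section AdditiveMorphism.

Variables (U V : zmodType) (f : U -> V).
Hypothesis fD : {morph f : u v / u + v >-> u + v}.

Lemma addmorph0 : f 0 = 0.
Proof. by apply: (addrI (f 0)); rewrite -fD !addr0. Qed.

Lemma addmorphMn x n : f (x *+ n) = f x *+ n.
Proof. by elim: n => [|n IHn]; rewrite ?addmorph0 // !mulrS fD IHn. Qed.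

End AdditiveMorphism.

Section Code.

Variables (p a b : nat) (C : {set amb p a b}).
Hypothesis p_pr : prime p.

Lemma additive_codeD : is_additive_code C -> {in C &, forall x y, x + y \in C}.
Proof.
move=> [C0 CB] x y Cx Cy.
by have := CB x (0 - y) Cx (CB 0 y C0 Cy); rewrite sub0r opprK.
Qed.

Lemma Phi_torsion_in_kernel c0 :
  is_additive_code C -> c0 \in C -> c0 *+ p = 0 ->
  Phi c0 \in kernel [set Phi c | c in C].
Proof.
move=> codeC Cc0 torsion_c0; apply/translate_sub_kernel/subsetP.
move=> _ /imsetP[_ /imsetP[c Cc ->] ->].
by rewrite addrC -Phi_addl_torsion // imset_f // additive_codeD.
Qed.

Variables (g d k : nat).
Hypothesis typeC : has_type C g d k.

Lemma card_code : #|C| = (p ^ (g + 2 * d))%N.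
Proof.
have [[f [_ f_inj <-]] _] := typeC.
rewrite card_imset // cardsT card_prod !card_ffun !card_ord Fp_cast //.
by rewrite Zp_cast ?Zp_sqr_gt1 // expnD expnM mulnC.
Qed.

Lemma card_code_torsion : (p ^ (g + d) <= #|[set c in C | c *+ p == 0%R]|)%N.
Proof.
have [[f [fD f_inj defC]] _] := typeC.
pose mulp (z : {ffun 'I_g -> 'F_p} * {ffun 'I_d -> 'F_p}) :=
  (z.1, [ffun i => (((z.2 i : nat) * p)%:R : 'Z_(p ^ 2))]).
have mulp_inj : injective mulp.
  move=> [x y] [x' y'] [-> /ffunP eq_y]; congr pair; apply/ffunP => i.
  by have := eq_y i; rewrite !ffunE; apply: Zp_sqr_mulp_inj.
have mulp_torsion z : mulp z *+ p = 0.
  rewrite pairMnE; congr pair; apply/ffunP => i; rewrite ffunMnE !ffunE.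
    by rewrite -mulr_natr pchar_Fp_0 ?mulr0.
  exact: Zp_sqr_mulp_torsion.
have <- : #|(f \o mulp) @: setT| = (p ^ (g + d))%N.
  rewrite card_imset; last exact: inj_comp.
  by rewrite cardsT card_prod !card_ffun !card_ord Fp_cast // expnD.
apply/subset_leq_card/subsetP => _ /imsetP[z _ ->]; rewrite inE /=.
have f0 : f 0 = 0 := addmorph0 fD.
by rewrite -defC imset_f //= -addmorphMn // mulp_torsion f0.
Qed.

End Code.

Theorem lemma12 (p : nat) (hp : prime p) (hp2 : (2 < p)%N)
  (alpha beta gamma delta kappa : nat) (C : {set amb p alpha beta}) :
  is_additive_code C ->
  has_type C gamma delta kappa ->
  (gamma + delta <= ker_dim [set Phi c | c in C] <= gamma + 2 * delta)%N.
Proof.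
move=> codeC typeC; have [C0 _] := codeC.
apply/andP; split; rewrite -(leq_exp2l _ _ (prime_gt1 hp)) -card_kernel //.
  apply: leq_trans (card_code_torsion hp typeC) _.
  rewrite -(card_imset _ (@Phi_inj _ hp _ _)); apply/subset_leq_card/subsetP.
  move=> _ /imsetP[c /setIdP[Cc /eqP torsion_c] ->].
  exact: Phi_torsion_in_kernel.
rewrite -(card_code hp typeC) -(card_imset _ (@Phi_inj _ hp _ _)).
by apply: card_kernel_le (imset_f _ C0).
Qed.
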